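(* Let $2\le k<n$, $w=n-k$, and suppose there is an $(n,w,n-1)_q$ code of size $\frac{n(n-1)}{k(k-1)}$. Let $$R=\frac{(n-1)(n-k)}{k(k-1)},\qquad \widetilde P=\frac{(n-1)\big((n-k^2)(n-1)+k(k-1)^2\big)}{2k^2(k-1)^2},$$ $a=\lfloor R/(q-1)\rfloor$ and $b=R-a(q-1)$. Then $(q-1)\binom{a}{2}+ba\le\lfloor\widetilde P\rfloor$, and in particular $q-1\ge R-\lfloor\widetilde P\rfloor$.
   Context: $\mathbb{Z}_q=\{0,\dots,q-1\}$ (an alphabet); $\mathrm{wt}$ = number of nonzero coordinates; $d$ = Hamming distance; $J_q(n,w)$ = weight-$w$ words of $\mathbb{Z}_q^n$. An $(n,w,d)_q$ code of size $M$ is a subset $C\subseteq J_q(n,w)$ with $|C|=M$ and pairwise distances at least $d$. *)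

From mathcomp Require Import all_boot all_order all_algebra.
Set Implicit Arguments. Unset Strict Implicit. Unset Printing Implicit Defensive.
Import Order.TTheory GRing.Theory Num.Theory.

Definition word (n q : nat) := {ffun 'I_n -> 'I_q}.

Definition wt (n q : nat) (x : word n q) : nat := #|[set i | val (x i) != 0%N]|.

Definition hdist (n q : nat) (x y : word n q) : nat := #|[set i | x i != y i]|.

Definition is_code (n q w d : nat) (C : {set word n q}) : Prop :=
  (forall x, x \in C -> wt x = w) /\
  (forall x y, x \in C -> y \in C -> x != y -> d <= hdist x y).

From mathcomp Require Import all_boot all_order all_algebra.
Import Order.TTheory GRing.Theory Num.Theory.
From mathcomp Require Import zify ring lra.

(* Two codewords at distance at least n - 1 agree in at most one coordinate.
   In particular they share at most one zero position, so every coordinate is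
   zero in at most (n - 1)/(k - 1) codewords, and the size n(n-1)/(k(k-1))
   forces equality: every coordinate carries a nonzero symbol in exactly R
   codewords.  Counting agreeing ordered pairs of codewords coordinate by
   coordinate bounds the sum of the squared symbol multiplicities by
   M(M + n - 1).  At each coordinate the R nonzero entries are spread over
   q - 1 symbols, and f^2 >= (2a + 1) f - a(a + 1) turns the bound into
   (q - 1) C(a, 2) + b a <= P; the left side is an integer, hence at most
   floor P, and it is at least R - (q - 1). *)

Lemma sum_nat_of_bool {T : finType} (P : pred T) : \sum_(t : T) P t = #|[set t | P t]|.
Proof. by rewrite -sum1dep_card [RHS]big_mkcond; apply: eq_bigr => t _; case: (P t). Qed.

Lemma sum_eq_indicator {T : finType} (P : pred T) (t : T) :
  \sum_(u | P u) (t == u : nat) = P t.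
Proof.
case Pt: (P t); last by rewrite big1 // => u Pu; case: eqP => // tu; rewrite -tu Pt in Pu.
by rewrite (bigD1 t) //= eqxx big1 // => u /andP[_ /negbTE]; rewrite eq_sym => ->.
Qed.

(* (f - a) (f - a - 1) >= 0 for integers f and a. *)
Lemma leq_tangent_sq (f a : nat) : (2 * a + 1) * f <= f ^ 2 + a * (a + 1).
Proof. rewrite -mulnn; case: (leqP f a) => ?; nia. Qed.

Lemma bin2_mul2 (a : nat) : 2 * 'C(a, 2) = a * a.-1.
Proof. by rewrite -mul_bin_diag bin1. Qed.

Lemma leq_divn_bin2 (m d : nat) :
  0 < d -> m <= d + d * 'C(m %/ d, 2) + m %% d * (m %/ d).
Proof.
move=> d_gt0; have := ltn_pmod m d_gt0; have := divn_eq m d; have := bin2_mul2 (m %/ d).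
by case: (m %/ d) => [|[|a]]; nia.
Qed.

Lemma divn_bin2_tangentE (m d : nat) :
  2 * (d * 'C(m %/ d, 2) + m %% d * (m %/ d)) + d * (m %/ d * (m %/ d + 1))
    = 2 * (m %/ d) * m.
Proof.
have := bin2_mul2 (m %/ d); have := divn_eq m d.
by case: (m %/ d) => [|a]; nia.
Qed.

Section SymbolCounts.

Local Set Implicit Arguments.
Local Unset Strict Implicit.

Variables (n q : nat) (C : {set word n q}).

Definition sym_count (i : 'I_n) (v : 'I_q) : nat := \sum_(x in C) (x i == v).

Lemma sum_sym_count i : \sum_v sym_count i v = #|C|.
Proof.
rewrite exchange_big /= -sum1_card; apply: eq_bigr => x _.
exact: (sum_eq_indicator xpredT (x i)).
Qed.

Lemma sym_count_le i v : sym_count i v <= #|C|.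
Proof. by rewrite -(sum_sym_count i) (bigD1 v) ?leq_addr. Qed.

Lemma sum_sym_count_sq i :
  \sum_v sym_count i v ^ 2 = \sum_(x in C) \sum_(y in C) (x i == y i).
Proof.
transitivity (\sum_v \sum_(x in C) \sum_(y in C) ((x i == v) * (y i == v))).
  apply: eq_bigr => v _; rewrite -mulnn big_distrl.
  by apply: eq_bigr => x _; rewrite big_distrr.
rewrite exchange_big; apply: eq_bigr => x _; rewrite exchange_big.
apply: eq_bigr => y _.
rewrite (eq_bigr (fun v => (x i == v) * (x i == y i))); last first.
  by move=> v _; case: (eqVneq (x i) v) => [->|]; rewrite ?mul0n // eq_sym.
by rewrite -big_distrl /= (sum_eq_indicator xpredT) mul1n.
Qed.

Lemma card_agree_add_hdist (x y : word n q) :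
  #|[set i | x i == y i]| + hdist x y = n.
Proof.
rewrite /hdist -[RHS](card_ord n) -(cardsC [set i | x i == y i]).
by congr (_ + _); apply: eq_card => i; rewrite !inE.
Qed.

Variable w : nat.
Hypothesis codeC : is_code w (n - 1) C.

Lemma code_agree_le1 x y :
  x \in C -> y \in C -> x != y -> #|[set i | x i == y i]| <= 1.
Proof.
move=> xC yC xy; have := codeC.2 x y xC yC xy.
have := card_agree_add_hdist x y; move: (#|_|) (hdist _ _) => a h; lia.
Qed.

Lemma sum_sym_count_sq_le :
  \sum_i \sum_v sym_count i v ^ 2 <= #|C| * (#|C| + (n - 1)).
Proof.
rewrite (eq_bigr _ (fun i _ => sum_sym_count_sq i)) exchange_big /=.
rewrite -sum_nat_const; apply: leq_sum => x xC; rewrite exchange_big /=.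
apply: (@leq_trans (\sum_(y in C) (1 + (n - 1) * (x == y)))).
  apply: leq_sum => y yC; rewrite sum_nat_of_bool.
  case: (eqVneq x y) => [<-|xy]; last by rewrite muln0 addn0 code_agree_le1.
  by rewrite (leq_trans (max_card _)) // card_ord muln1; lia.
rewrite big_split /= sum1_card -big_distrr /=.
by rewrite (sum_eq_indicator (fun y => y \in C)) xC muln1.
Qed.

End SymbolCounts.

Section ZeroCounts.

Local Set Implicit Arguments.
Local Unset Strict Implicit.

Variables (n k Q : nat) (C : {set word n Q.+1}).
Hypothesis codeC : is_code (n - k) (n - 1) C.

Lemma common_zeros_le1 i j :
  i != j -> \sum_(x in C) ((x i == ord0) * (x j == ord0)) <= 1.
Proof.
move=> ij; rewrite big_mkcond /=.
rewrite (eq_bigr (fun x => [&& x \in C, x i == ord0 & x j == ord0] : nat)); last first.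
  by move=> x _; case: (x \in C); case: (x i == ord0); case: (x j == ord0).
rewrite sum_nat_of_bool; apply/card_le1_eqP => x y; rewrite !inE.
case/and3P=> xC /eqP xi /eqP xj /and3P[yC /eqP yi /eqP yj].
case: (eqVneq x y) => // xy; exfalso.
have agree_ij : [set i; j] \subset [set l | x l == y l].
  by apply/subsetP => l; rewrite !inE => /orP[] /eqP ->; rewrite ?xi ?yi ?xj ?yj.
have := subset_leq_card agree_ij; rewrite cards2 ij.
by have := code_agree_le1 codeC xC yC xy; lia.
Qed.

Hypothesis k_le_n : k <= n.

Lemma card_zeros x : x \in C -> #|[set i | x i == ord0]| = k.
Proof.
move=> xC; have := codeC.1 x xC; rewrite /wt.
have := cardsC [set i | x i == ord0]; rewrite card_ord.
have -> : ~: [set i | x i == ord0] = [set i | val (x i) != 0].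
  by apply/setP => i; rewrite !inE.
move: (#|_|) (#|_|) => z nz; lia.
Qed.

Lemma sum_sym_count0 : \sum_i sym_count C i ord0 = #|C| * k.
Proof.
rewrite exchange_big /= -sum_nat_const; apply: eq_bigr => x xC.
by rewrite sum_nat_of_bool card_zeros.
Qed.

Lemma sym_count0_le i : sym_count C i ord0 * (k - 1) <= n - 1.
Proof.
have row x : x \in C ->
    (x i == ord0) * (k - 1) = \sum_(j | j != i) (x i == ord0) * (x j == ord0).
  move=> xC; rewrite -big_distrr /=.
  have := card_zeros xC; rewrite -sum_nat_of_bool (bigD1 i) //=.
  by case: (x i == ord0) => /=; lia.
rewrite big_distrl /= (eq_bigr _ row) exchange_big /=.
apply: (@leq_trans (\sum_(j | j != i) 1)).
  by apply: leq_sum => j ji; apply: common_zeros_le1; rewrite eq_sym.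
rewrite sum1dep_card (_ : [set j | j != i] = [set~ i]) ?cardsC1 ?card_ord ?subn1 //.
by apply/setP => j; rewrite !inE.
Qed.

Lemma sum_sym_count0_tangent a :
  \sum_i ((2 * a + 1) * (#|C| - sym_count C i ord0) + sym_count C i ord0 ^ 2)
    <= #|C| * (#|C| + (n - 1)) + n * (Q * (a * (a + 1))).
Proof.
apply: leq_trans (leq_add (sum_sym_count_sq_le codeC) (leqnn _)).
have -> : n * (Q * (a * (a + 1))) = \sum_(i < n) Q * (a * (a + 1)).
  by rewrite sum_nat_const card_ord.
rewrite -big_split /=; apply: leq_sum => i _.
have -> : #|C| - sym_count C i ord0 = \sum_(v | v != ord0) sym_count C i v.
  by rewrite -(sum_sym_count C i) (bigD1 ord0) //= addKn.
rewrite [X in _ <= X + _](bigD1 ord0) //= addnC -addnA leq_add2l big_distrr /=.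
apply: (@leq_trans (\sum_(v | v != ord0) (sym_count C i v ^ 2 + a * (a + 1)))).
  by apply: leq_sum => v _; apply: leq_tangent_sq.
rewrite big_split /= sum_nat_cond_const (_ : [set v | v != ord0] = [set~ ord0]).
  by rewrite cardsC1 card_ord.
by apply/setP => v; rewrite !inE.
Qed.

Hypothesis cardC : #|C| * (k * (k - 1)) = n * (n - 1).

(* Summed over i, the bounds of [sym_count0_le] add up exactly to [cardC]. *)
Lemma sym_count0 i : sym_count C i ord0 * (k - 1) = n - 1.
Proof.
have : \sum_i (n - 1 - sym_count C i ord0 * (k - 1)) = 0.
  rewrite sumnB => [|j _]; last exact: sym_count0_le.
  by rewrite -big_distrl /= sum_sym_count0 sum_nat_const card_ord -mulnA cardC subnn.
move/eqP; rewrite sum_nat_eq0 => /forallP/(_ i) /=.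
have := sym_count0_le i; lia.
Qed.

Hypothesis k_ge2 : 2 <= k.

Lemma code_bin2_bound i (r := sym_count C i ord0) (m := #|C| - r) :
  2 * n * (Q * 'C(m %/ Q, 2) + m %% Q * (m %/ Q)) + n * (r ^ 2 + m)
    <= #|C| * (#|C| + (n - 1)).
Proof.
rewrite -(leq_add2r (n * (Q * (m %/ Q * (m %/ Q + 1))))).
apply: leq_trans (sum_sym_count0_tangent (m %/ Q)).
have const j : sym_count C j ord0 = r.
  by apply/eqP; rewrite -(eqn_pmul2r (_ : 0 < k - 1)) ?sym_count0 //; lia.
rewrite (eq_bigr (fun=> (2 * (m %/ Q) + 1) * m + r ^ 2)) => [|j _]; last by rewrite const.
rewrite sum_nat_const card_ord.
have := divn_bin2_tangentE m Q; nia.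
Qed.

End ZeroCounts.

Lemma wt_gt0_alphabet_gt1 (n q : nat) (x : word n q) : 0 < wt x -> 1 < q.
Proof.
case/card_gt0P => i; rewrite inE -lt0n => xi_gt0.
exact: leq_ltn_trans xi_gt0 (ltn_ord (x i)).
Qed.

Local Open Scope ring_scope.

Lemma floor_divn (F : archiRealFieldType) (m d : nat) :
  Num.floor (m%:R / d%:R : F) = (m %/ d)%N%:Z.
Proof.
case: d => [|d]; first by rewrite invr0 mulr0 divn0 floor0.
apply: floor_def; rewrite -[_ + 1]/(Posz (m %/ d.+1 + 1)) addn1 !pmulrn.
rewrite ler_pdivlMr ?ltr_pdivrMr ?ltr0n // -!natrM ler_nat ltr_nat.
by rewrite leq_divM ltn_ceil.
Qed.

Lemma natr_mul_pred (F : pzRingType) (a : nat) : (a * a.-1)%:R = a%:R * (a%:R - 1) :> F.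
Proof. by case: a => [|a]; rewrite ?mul0n ?mul0r // natrM -natr1 addrK. Qed.

(* [M - r] is the number R of codewords with a nonzero symbol at a fixed
   coordinate, and [d] stands for q - 1. *)
Lemma design_floor_bound (n k d M r : nat) :
  (2 <= k)%N -> (k < n)%N -> (0 < d)%N -> (r <= M)%N ->
  (M%:R : rat) = (n%:R * (n%:R - 1)) / (k%:R * (k%:R - 1)) ->
  (r * (k - 1) = n - 1)%N ->
  (2 * n * (d * 'C((M - r) %/ d, 2) + (M - r) %% d * ((M - r) %/ d))
     + n * (r ^ 2 + (M - r)) <= M * (M + (n - 1)))%N ->
  let R : rat := ((n%:R - 1) * (n%:R - k%:R)) / (k%:R * (k%:R - 1)) in
  let Pt : rat := ((n%:R - 1) * ((n%:R - k%:R ^+ 2) * (n%:R - 1)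
                      + k%:R * (k%:R - 1) ^+ 2))
                  / (2 * k%:R ^+ 2 * (k%:R - 1) ^+ 2) in
  let a : int := Num.floor (R / d%:R) in
  let b : rat := R - a%:~R * d%:R in
  d%:R * (a%:~R * (a%:~R - 1) / 2) + b * a%:~R <= (Num.floor Pt)%:~R
  /\ R - (Num.floor Pt)%:~R <= d%:R.
Proof.
move=> k_ge2 k_lt_n d_gt0 r_le_M cardM rk; set m := (M - r)%N.
set L := (d * 'C(m %/ d, 2) + m %% d * (m %/ d))%N => count_bound R Pt a b.
have k_neq0 : k%:R != 0 :> rat by rewrite pnatr_eq0; lia.
have k1_neq0 : k%:R - 1 != 0 :> rat by rewrite subr_eq0 pnatr_eq1; lia.
have n_gt0 : 0 < n%:R :> rat by rewrite ltr0n; lia.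
have r_eq : r%:R = (n%:R - 1) / (k%:R - 1) :> rat.
  have := congr1 (fun j => j%:R : rat) rk; rewrite /= natrM !natrB; try lia.
  by move=> <-; rewrite mulfK.
have R_eq : R = m%:R by rewrite natrB // cardM r_eq /R; field; rewrite k_neq0 k1_neq0.
have a_eq : a = (m %/ d)%:Z by rewrite /a R_eq floor_divn.
have L_eq : d%:R * (a%:~R * (a%:~R - 1) / 2) + b * a%:~R = L%:R :> rat.
  have bin2_eq : ('C(m %/ d, 2)%:R : rat) = (m %/ d)%:R * ((m %/ d)%:R - 1) / 2.
    by rewrite -natr_mul_pred -bin2_mul2 natrM; field.
  have m_eq : (m%:R : rat) = (m %/ d)%:R * d%:R + (m %% d)%:R.
    by rewrite -natrM -natrD -divn_eq.
  by rewrite /b R_eq a_eq -pmulrn /L natrD !natrM bin2_eq m_eq; field.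
have Pt_eq : Pt = ((M * (M + (n - 1)))%:R - (n * (r ^ 2 + m))%:R) / (2 * n%:R).
  rewrite !natrM !natrD natrX !natrB; try lia.
  by rewrite cardM r_eq /Pt; field; rewrite k_neq0 k1_neq0 lt0r_neq0.
have L_le_Pt : L%:R <= Pt.
  rewrite Pt_eq ler_pdivlMr ?mulr_gt0 // lerBrDr -!natrM -natrD ler_nat.
  by rewrite mulnC.
have L_le_floor : (L%:R <= (Num.floor Pt)%:~R :> rat).
  by rewrite -[L%:R]/(L%:Z%:~R : rat) ler_int floor_ge_int.
split; first by rewrite L_eq.
have := leq_divn_bin2 m d d_gt0; rewrite -addnA -/L -(ler_nat rat) natrD -R_eq => m_le.
lra.
Qed.

Theorem mainTheorem17 (n k q : nat) (C : {set word n q}) :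
  (2 <= k)%N -> (k < n)%N ->
  is_code (n - k) (n - 1) C ->
  (#|C|%:R : rat) = (n%:R * (n%:R - 1)) / (k%:R * (k%:R - 1)) ->
  let R : rat := ((n%:R - 1) * (n%:R - k%:R)) / (k%:R * (k%:R - 1)) in
  let Pt : rat := ((n%:R - 1) * ((n%:R - k%:R ^+ 2) * (n%:R - 1)
                      + k%:R * (k%:R - 1) ^+ 2))
                  / (2 * k%:R ^+ 2 * (k%:R - 1) ^+ 2) in
  let a : int := Num.floor (R / (q%:R - 1)) in
  let b : rat := R - a%:~R * (q%:R - 1) in
  (q%:R - 1) * (a%:~R * (a%:~R - 1) / 2) + b * a%:~R <= (Num.floor Pt)%:~R
  /\ R - (Num.floor Pt)%:~R <= q%:R - 1.
Proof.
move=> k_ge2 k_lt_n codeC cardC.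
have cardCn : (#|C| * (k * (k - 1)) = n * (n - 1))%N.
  apply/eqP; rewrite -(eqr_nat rat) !natrM !natrB ?cardC; try lia.
  by apply/eqP; field; rewrite pnatr_eq0 subr_eq0 pnatr_eq1; apply/andP; split; lia.
have [x xC] : exists x, x \in C by apply/card_gt0P; move: cardCn; case: #|C|; lia.
have q_gt1 : (1 < q)%N.
  by apply: (@wt_gt0_alphabet_gt1 _ _ x); rewrite codeC.1 // subn_gt0.
case: q q_gt1 C codeC cardC cardCn x xC => [|[|Q]] // _ C codeC cardC cardCn _ _.
have n_gt0 : (0 < n)%N by lia.
pose i0 := Ordinal n_gt0.
rewrite (_ : Q.+2%:R - 1 = Q.+1%:R :> rat) => [|]; last by rewrite -natr1 addrK.
apply: (design_floor_bound n k Q.+1 #|C| (sym_count C i0 ord0)) => //.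
- exact: sym_count_le.
- exact: (sym_count0 codeC (ltnW k_lt_n) cardCn i0).
- exact: (code_bin2_bound codeC (ltnW k_lt_n) cardCn k_ge2 i0).
Qed.
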